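(* Let $\omega$ be a circle with center $O$ and $\xi$ an ellipse with center $O$ lying inside $\omega$. Let $(u_1,\dots,u_n)$ be a Poncelet $n$-gon for the pair $(\omega,\xi)$. Then $\sum_{i=1}^n\cos\angle u_iOu_{i+1}$ is constant in the Poncelet family of $n$-gons containing $(u_1,\dots,u_n)$.
   Context: Indices are mod $n$. A Poncelet $n$-gon for a pair of conics $(C,D)$, $D$ inside $C$, is a closed polygon with all vertices on $C$ and all sides tangent to $D$. By the Poncelet porism, if one such closed $n$-gon exists, then starting from any point of $C$ and successively drawing tangent lines to $D$ (in the same rotational sense) produces a closed $n$-gon; the Poncelet family is this continuous 1-parameter family. $\angle u_iOu_{i+1}\in[0,\pi]$ is the angle between the vectors $u_i-O$ and $u_{i+1}-O$. *)

From Stdlib Require Import Reals Lra.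
Open Scope R_scope.

Definition point := (R * R)%type.

Definition vsub (p q : point) : point := (fst p - fst q, snd p - snd q).
Definition dot (p q : point) : R := fst p * fst q + snd p * snd q.
Definition cross (p q : point) : R := fst p * snd q - snd p * fst q.
Definition vnorm (p : point) : R := sqrt (dot p p).

Definition angle (A O B : point) : R :=
  acos (dot (vsub A O) (vsub B O) / (vnorm (vsub A O) * vnorm (vsub B O))).

Definition on_circle (O : point) (r : R) (p : point) : Prop :=
  vnorm (vsub p O) = r.

Definition is_ellipse_params (a b c : R) : Prop := 0 < a /\ 0 < a * c - b * b.

Definition on_ellipse (O : point) (a b c : R) (p : point) : Prop :=
  let X := fst p - fst O in let Y := snd p - snd O in
  a * X * X + 2 * b * X * Y + c * Y * Y = 1.

Definition ellipse_inside_circle (O : point) (a b c r : R) : Prop :=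
  forall p, on_ellipse O a b c p -> vnorm (vsub p O) < r.

Definition tangent_line (O : point) (a b c : R) (p q : point) : Prop :=
  p <> q /\
  exists! t : R, on_ellipse O a b c (fst p + t * (fst q - fst p),
                                     snd p + t * (snd q - snd p)).

(* (u_0, ..., u_{n-1}) (indices mod n) is a Poncelet n-gon for the pair
   (circle(O,r), ellipse(O,a,b,c)): vertices on the circle, sides tangent to
   the ellipse, and consecutive sides are distinct tangent lines, i.e. the
   polygon is obtained by successively drawing the *other* tangent line
   (no back-tracking u_{i+2} = u_i). *)
Definition poncelet_ngon (O : point) (r a b c : R) (n : nat) (u : nat -> point)
  : Prop :=
  forall i, (i < n)%nat ->
    on_circle O r (u i) /\
    tangent_line O a b c (u i) (u (S i mod n)) /\
    u i <> u (S (S i) mod n).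

(* v belongs to the Poncelet family of u: v is a Poncelet n-gon for the same
   pair, traversed in the same rotational sense about O as u. *)
Definition in_poncelet_family (O : point) (r a b c : R) (n : nat)
  (u v : nat -> point) : Prop :=
  poncelet_ngon O r a b c n v /\
  0 < cross (vsub (u 0%nat) O) (vsub (u (1 mod n)%nat) O) *
      cross (vsub (v 0%nat) O) (vsub (v (1 mod n)%nat) O).

Definition cos_angle_sum (O : point) (n : nat) (u : nat -> point) : R :=
  sum_f_R0 (fun i => cos (angle (u i) O (u (S i mod n)))) (pred n).

(* For p, q on the circle |x| = r, the chord pq is tangent to the
   ellipse iff B(p, q) = K for an explicit symmetric bilinear form B and constant K, so every
   point of the circle has exactly two tangency partners.  Following the counterclockwise
   partner lifts to an increasing map beta on angles with beta (t + 2 pi) = beta t + 2 pi;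
   its n-th iterate therefore has the same rotation number m at the starting angle of every
   closed Poncelet n-gon.
   The key is a generating function: if Phi' (t) = - r^2 B(p, p) / sqrt (r^2 |N p|^2 - K^2)
   with p = p(t) the point of angle t and N the matrix of B, then
   Phi (beta t) - Phi t - <p(t), p(beta t)> has zero derivative, hence is a constant d.
   Along a closed n-gon the sum telescopes to
   sum <u_i, u_(i+1)> = m (Phi (2 pi) - Phi 0) - n d,
   and sum cos /_ u_i O u_(i+1) = r^(-2) sum <u_i, u_(i+1)>.  Clockwise polygons are
   reduced to counterclockwise ones by a reflection. *)

From Stdlib Require Import Reals Lra Nsatz ZArith Lia.
From Coquelicot Require Import Coquelicot.
Open Scope R_scope.

Lemma shift_IZR (f : R -> R) (T c : R) : (forall x, f (x + T) = f x + c) ->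
  forall x (k : Z), f (x + T * IZR k) = f x + IZR k * c.
Proof.
  intros Hf.
  assert (Hn : forall x (k : nat), f (x + T * INR k) = f x + INR k * c).
  { intros x k. induction k as [|k IH].
    - simpl. rewrite Rmult_0_r, Rmult_0_l, !Rplus_0_r. reflexivity.
    - rewrite S_INR. replace (x + T * (INR k + 1)) with ((x + T * INR k) + T) by ring.
      rewrite Hf, IH. ring. }
  intros x [|p|p].
  - simpl. rewrite Rmult_0_r, Rmult_0_l, !Rplus_0_r. reflexivity.
  - rewrite <- positive_nat_Z, <- INR_IZR_INZ. apply Hn.
  - rewrite <- Pos2Z.opp_pos, opp_IZR, <- positive_nat_Z, <- INR_IZR_INZ.
    specialize (Hn (x + T * - INR (Pos.to_nat p)) (Pos.to_nat p)).
    replace (x + T * - INR (Pos.to_nat p) + T * INR (Pos.to_nat p)) with x in Hn by ring.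
    lra.
Qed.

Section TranslationNumber.

Variables (F : R -> R) (T : R).
Hypothesis T_pos : 0 < T.
Hypothesis F_mono : forall x y, x <= y -> F x <= F y.
Hypothesis F_shift : forall x, F (x + T) = F x + T.

(* Translate [y] by a multiple of [T] into [[x, x + T)] and compare with [x]. *)
Lemma translation_number_le x y (m1 m2 : Z) :
  F x = x + T * IZR m1 -> F y = y + T * IZR m2 -> (m1 <= m2)%Z.
Proof.
  intros Hx Hy.
  set (k := Int_part ((y - x) / T)).
  destruct (base_Int_part ((y - x) / T)) as [B1 B2]. fold k in B1, B2.
  set (y' := y + T * IZR (- k)).
  assert (Hy' : F y' = y' + T * IZR m2).
  { unfold y'. rewrite (shift_IZR F T T F_shift), Hy. ring. }
  assert (Hk : y - x < (IZR k + 1) * T).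
  { apply (Rmult_lt_reg_r (/ T)); [apply Rinv_0_lt_compat; lra|].
    replace ((IZR k + 1) * T * / T) with (IZR k + 1) by (field; lra).
    change ((y - x) * / T) with ((y - x) / T). lra. }
  assert (Hlt : y' < x + T) by (unfold y'; rewrite opp_IZR; lra).
  destruct (Rle_or_lt x y') as [Hle | Hgt].
  - pose proof (F_mono _ _ Hle) as M. rewrite Hx, Hy' in M.
    assert (IZR (m1 - m2) < 1).
    { rewrite minus_IZR. apply (Rmult_lt_reg_l T); lra. }
    apply lt_IZR in H. lia.
  - exfalso. assert (IZR k * T <= y - x).
    { apply (Rmult_le_reg_r (/ T)); [apply Rinv_0_lt_compat; lra|].
      replace (IZR k * T * / T) with (IZR k) by (field; lra). exact B1. }
    unfold y' in Hgt. rewrite opp_IZR in Hgt. lra.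
Qed.

Lemma translation_number_unique x y (m1 m2 : Z) :
  F x = x + T * IZR m1 -> F y = y + T * IZR m2 -> m1 = m2.
Proof.
  intros Hx Hy.
  pose proof (translation_number_le x y m1 m2 Hx Hy).
  pose proof (translation_number_le y x m2 m1 Hy Hx). lia.
Qed.

End TranslationNumber.

Lemma continuous_of_derive (f : R -> R) x l : is_derive f x l -> continuity_pt f x.
Proof.
  intros Hd. apply continuity_pt_filterlim.
  exact (@ex_derive_continuous R_AbsRing R_NormedModule f x (ex_intro _ l Hd)).
Qed.

Lemma derive_nonneg_nondecreasing (f df : R -> R) :
  (forall x, is_derive f x (df x)) -> (forall x, 0 <= df x) ->
  forall x y, x <= y -> f x <= f y.
Proof.
  intros Hd Hp x y Hxy.
  destruct (MVT_gen f x y df) as [z [_ Hz]].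
  - intros; apply Hd.
  - intros; eapply continuous_of_derive, Hd.
  - specialize (Hp z). nra.
Qed.

Lemma derive_zero_const (f : R -> R) : (forall x, is_derive f x 0) ->
  forall x y, f x = f y.
Proof.
  intros Hd x y.
  destruct (MVT_gen f x y (fun _ => 0)) as [z [_ Hz]].
  - intros; apply Hd.
  - intros; eapply continuous_of_derive, Hd.
  - lra.
Qed.

Lemma dot_cross_sq p q : dot p q * dot p q + cross p q * cross p q = dot p p * dot q q.
Proof. unfold dot, cross; ring. Qed.

Definition circ (r t : R) : point := (r * cos t, r * sin t).

Lemma circ_on_circle r t : dot (circ r t) (circ r t) = r * r.
Proof. unfold dot, circ; simpl. pose proof (sin2_cos2 t). unfold Rsqr in *. nra. Qed.

Lemma circ_onto r p : 0 < r -> dot p p = r * r -> exists t, circ r t = p.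
Proof.
  intros Hr H. destruct p as [x y]. unfold dot in H; cbn [fst snd] in H.
  set (c := x / r).
  assert (Hx : x = r * c) by (unfold c; field; lra).
  assert (Hc : -1 <= c <= 1).
  { assert (c * c <= 1).
    { rewrite Hx in H. assert (0 < r * r) by nra. nra. }
    nra. }
  assert (Hs : sqrt (1 - c²) * sqrt (1 - c²) = 1 - c * c)
    by (rewrite sqrt_sqrt; unfold Rsqr; nra).
  assert (0 <= r * sqrt (1 - c²)) by (pose proof (sqrt_pos (1 - c²)); nra).
  assert (y * y = (r * sqrt (1 - c²)) * (r * sqrt (1 - c²))) by nra.
  unfold circ. destruct (Rle_or_lt 0 y).
  - exists (acos c). rewrite cos_acos, sin_acos by exact Hc. f_equal; nra.
  - exists (- acos c). rewrite cos_neg, sin_neg, cos_acos, sin_acos by exact Hc. f_equal; nra.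
Qed.

Lemma circ_inj_mod_2PI r s t : 0 < r -> circ r s = circ r t ->
  exists k : Z, s = t + 2 * PI * IZR k.
Proof.
  intros Hr E. injection E as Hc Hs.
  apply Rmult_eq_reg_l in Hc, Hs; try lra.
  assert (Hd : cos (s - t) = 1).
  { unfold Rminus. rewrite cos_plus, cos_neg, sin_neg, Hc, Hs.
    pose proof (sin2_cos2 t). unfold Rsqr in *. lra. }
  assert (Hh : sin ((s - t) / 2) = 0).
  { replace (s - t) with (2 * ((s - t) / 2)) in Hd by field.
    rewrite cos_2a_sin in Hd. nra. }
  destruct (sin_eq_0_0 _ Hh) as [k Hk]. exists k. lra.
Qed.

Lemma cos_sin_2atan x :
  cos (2 * atan x) = (1 - x * x) / (1 + x * x) /\ sin (2 * atan x) = 2 * x / (1 + x * x).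
Proof.
  assert (Hs : sqrt (1 + x²) * sqrt (1 + x²) = 1 + x * x)
    by (rewrite sqrt_sqrt; unfold Rsqr; nra).
  assert (Hs0 : sqrt (1 + x²) <> 0) by (intro Z; rewrite Z in Hs; nra).
  rewrite cos_2a_sin, sin_2a, sin_atan, cos_atan. set (s := sqrt (1 + x²)) in *. split.
  - replace (1 - 2 * (x / s) * (x / s)) with (1 - 2 * (x * x) / (s * s)) by (field; exact Hs0).
    rewrite Hs. field. nra.
  - replace (2 * (x / s) * (1 / s)) with (2 * x / (s * s)) by (field; exact Hs0).
    rewrite Hs. reflexivity.
Qed.

Lemma half_angle_denom_pos r p q : 0 < r -> dot p p = r * r -> dot q q = r * r ->
  0 < cross p q -> 0 < r * r + dot p q.
Proof.
  intros Hr Hp Hq Hc. pose proof (dot_cross_sq p q) as L. rewrite Hp, Hq in L.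
  assert (0 < r * r) by nra. nra.
Qed.

(* Half-angle formula: the angle from [p] to [q] is [2 atan (cross p q / (r^2 + dot p q))]. *)
Lemma circ_rotate_to r t q : 0 < r -> dot q q = r * r -> 0 < cross (circ r t) q ->
  circ r (t + 2 * atan (cross (circ r t) q / (r * r + dot (circ r t) q))) = q.
Proof.
  intros Hr Hq Hc. set (p := circ r t) in *.
  assert (Hp : dot p p = r * r) by apply circ_on_circle.
  pose proof (half_angle_denom_pos r p q Hr Hp Hq Hc) as HX.
  pose proof (dot_cross_sq p q) as L. rewrite Hp, Hq in L.
  destruct (cos_sin_2atan (cross p q / (r * r + dot p q))) as [C S].
  assert (Hr2 : 0 < r * r) by nra.
  set (X := r * r + dot p q) in *. set (Y := cross p q) in *.
  assert (HD : 0 < X * X + Y * Y) by nra.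
  assert (C' : cos (2 * atan (Y / X)) = dot p q / (r * r)).
  { rewrite C. transitivity ((X * X - Y * Y) / (X * X + Y * Y)); [field; lra|].
    replace (Y * Y) with (r * r * (r * r) - dot p q * dot p q) in * by lra.
    unfold X in *. field. nra. }
  assert (S' : sin (2 * atan (Y / X)) = Y / (r * r)).
  { rewrite S. transitivity (2 * Y * X / (X * X + Y * Y)); [field; lra|].
    replace (Y * Y) with (r * r * (r * r) - dot p q * dot p q) in * by lra.
    unfold X in *. field. nra. }
  unfold circ at 1. rewrite cos_plus, sin_plus, C', S'.
  unfold Y, p, dot, cross, circ in *. destruct q as [q0 q1]; simpl in *.
  assert (E : sin t ^ 2 = 1 - cos t ^ 2) by (pose proof (sin2_cos2 t); unfold Rsqr in *; lra).
  f_equal; field_simplify; try lra; rewrite E; field; lra.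
Qed.

Definition dot_sum (n : nat) (w : nat -> point) : R :=
  sum_f_R0 (fun i => dot (w i) (w (S i))) (pred n).

Section TangencyCorrespondence.

Variables n11 n12 n22 K r : R.
Hypothesis r_pos : 0 < r.

Definition Nmul (p : point) : point :=
  (n11 * fst p + n12 * snd p, n12 * fst p + n22 * snd p).

Definition bform (p q : point) : R := dot q (Nmul p).

Definition qform (p : point) : R := bform p p.

Hypothesis qform_admissible : forall p, dot p p = r * r ->
  0 < qform p /\ K * K < qform p * qform p.

Definition tdisc (p : point) : R := r * r * dot (Nmul p) (Nmul p) - K * K.

Definition troot (p : point) : R := sqrt (tdisc p).

(* The tangency partners of [p] are the points of the circle on the line [bform p _ = K];
   [next p] is the counterclockwise one. *)
Definition next (p : point) : point :=
  ((K * fst (Nmul p) - troot p * snd (Nmul p)) / dot (Nmul p) (Nmul p),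
   (K * snd (Nmul p) + troot p * fst (Nmul p)) / dot (Nmul p) (Nmul p)).

Lemma bform_sym p q : bform p q = bform q p.
Proof. unfold bform, Nmul, dot; simpl; ring. Qed.

Lemma Nmul_norm_pos p : dot p p = r * r -> 0 < dot (Nmul p) (Nmul p).
Proof.
  intros Hp. destruct (qform_admissible p Hp) as [Hq _].
  unfold qform, bform in Hq. destruct (Nmul p) as [m0 m1]. unfold dot in *; simpl in *.
  destruct (Rle_or_lt (m0 * m0 + m1 * m1) 0); [|lra].
  assert (m0 = 0) by nra. assert (m1 = 0) by nra. subst. lra.
Qed.

Lemma tdisc_pos p : dot p p = r * r -> 0 < tdisc p.
Proof.
  intros Hp. destruct (qform_admissible p Hp) as [_ HK].
  pose proof (dot_cross_sq p (Nmul p)) as L. rewrite Hp in L.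
  pose proof (Rle_0_sqr (cross p (Nmul p))). unfold Rsqr in *.
  unfold tdisc, qform, bform in *. lra.
Qed.

Lemma troot_sq p : dot p p = r * r -> troot p * troot p = tdisc p.
Proof. intros Hp. apply sqrt_sqrt. left. now apply tdisc_pos. Qed.

Lemma troot_pos p : dot p p = r * r -> 0 < troot p.
Proof. intros Hp. apply sqrt_lt_R0. now apply tdisc_pos. Qed.

Lemma next_on_circle p : dot p p = r * r -> dot (next p) (next p) = r * r.
Proof.
  intros Hp. pose proof (troot_sq p Hp) as Hs. pose proof (Nmul_norm_pos p Hp) as Hm.
  unfold next, tdisc in *. set (s := troot p) in *. destruct (Nmul p) as [m0 m1].
  unfold dot in *; simpl in *.
  transitivity ((K * K + s * s) / (m0 * m0 + m1 * m1)); [field; lra|].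
  rewrite Hs. field. lra.
Qed.

Lemma bform_next p : dot p p = r * r -> bform p (next p) = K.
Proof.
  intros Hp. pose proof (Nmul_norm_pos p Hp) as Hm.
  unfold bform, next. destruct (Nmul p) as [m0 m1]. unfold dot in *; simpl in *.
  field. lra.
Qed.

Lemma cross_next_Nmul p : dot p p = r * r -> cross (next p) (Nmul p) = - troot p.
Proof.
  intros Hp. pose proof (Nmul_norm_pos p Hp) as Hm.
  unfold next. destruct (Nmul p) as [m0 m1]. unfold dot, cross in *; simpl in *.
  field. lra.
Qed.

Lemma partner_cross_sq p q : dot q q = r * r -> bform p q = K ->
  cross q (Nmul p) * cross q (Nmul p) = tdisc p.
Proof.
  intros Hq Hb. unfold tdisc. rewrite <- Hb, <- Hq.
  pose proof (dot_cross_sq q (Nmul p)). unfold bform. lra.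
Qed.

Lemma partner_orientation p q : dot p p = r * r -> dot q q = r * r -> bform p q = K ->
  cross q (Nmul p) * cross p q < 0.
Proof.
  intros Hp Hq Hb. destruct (qform_admissible p Hp) as [HP HK].
  pose proof (Nmul_norm_pos p Hp) as Hm.
  assert (E : 2 * qform p * cross q (Nmul p) * cross q p =
    cross q p * cross q p * dot (Nmul p) (Nmul p) + r * r * (qform p * qform p - K * K)).
  { clear qform_admissible HP HK Hm. unfold qform, bform, Nmul, dot, cross in *.
    destruct p as [x y], q as [x' y']; simpl in *. nsatz. }
  assert (0 < cross q (Nmul p) * cross q p).
  { pose proof (Rle_0_sqr (cross q p)). unfold Rsqr in *.
    assert (0 < r * r) by nra. nra. }
  replace (cross p q) with (- cross q p) by (unfold cross; ring). nra.
Qed.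

Lemma partner_decomp p q : dot p p = r * r -> bform p q = K ->
  q = ((K * fst (Nmul p) + cross q (Nmul p) * snd (Nmul p)) / dot (Nmul p) (Nmul p),
       (K * snd (Nmul p) - cross q (Nmul p) * fst (Nmul p)) / dot (Nmul p) (Nmul p)).
Proof.
  intros Hp Hb. pose proof (Nmul_norm_pos p Hp) as Hm. rewrite <- Hb.
  unfold bform. destruct (Nmul p) as [m0 m1], q as [x y]. unfold dot, cross in *; simpl in *.
  f_equal; field; lra.
Qed.

Lemma next_unique p q : dot p p = r * r -> dot q q = r * r -> bform p q = K ->
  0 < cross p q -> q = next p.
Proof.
  intros Hp Hq Hb Hc. pose proof (partner_orientation p q Hp Hq Hb) as Ho.
  pose proof (partner_cross_sq p q Hq Hb) as Hsq.
  pose proof (troot_sq p Hp). pose proof (troot_pos p Hp).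
  assert (cross q (Nmul p) < 0) by nra.
  assert (E : cross q (Nmul p) = - troot p) by nra.
  rewrite (partner_decomp p q Hp Hb), E. unfold next. f_equal; unfold Rdiv; ring.
Qed.

Lemma partners_opposite p q q' : dot p p = r * r -> dot q q = r * r -> dot q' q' = r * r ->
  bform p q = K -> bform p q' = K -> q <> q' ->
  cross q' (Nmul p) = - cross q (Nmul p).
Proof.
  intros Hp Hq Hq' Hb Hb' Hne.
  pose proof (partner_cross_sq p q Hq Hb). pose proof (partner_cross_sq p q' Hq' Hb').
  assert (F : (cross q' (Nmul p) - cross q (Nmul p)) * (cross q' (Nmul p) + cross q (Nmul p)) = 0)
    by lra.
  destruct (Rmult_integral _ _ F) as [Z|Z]; [|lra].
  exfalso. apply Hne. rewrite (partner_decomp p q Hp Hb), (partner_decomp p q' Hp Hb').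
  replace (cross q' (Nmul p)) with (cross q (Nmul p)) by lra. reflexivity.
Qed.

Lemma cross_next_pos p : dot p p = r * r -> 0 < cross p (next p).
Proof.
  intros Hp.
  pose proof (partner_orientation p _ Hp (next_on_circle p Hp) (bform_next p Hp)) as S.
  rewrite cross_next_Nmul in S by exact Hp. pose proof (troot_pos p Hp). nra.
Qed.

(* Named coordinates, so that [auto_derive] treats them as differentiable functions. *)
Definition wx (t : R) : R := fst (next (circ r t)).
Definition wy (t : R) : R := snd (next (circ r t)).

Lemma next_circ t : next (circ r t) = (wx t, wy t).
Proof. unfold wx, wy. destruct (next (circ r t)); reflexivity. Qed.

(* A continuous lift of [next] to angles, via the half-angle formula. *)
Definition beta (t : R) : R :=
  t + 2 * atan (cross (circ r t) (wx t, wy t) / (r * r + dot (circ r t) (wx t, wy t))).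

Lemma circ_beta t : circ r (beta t) = next (circ r t).
Proof.
  rewrite next_circ. apply circ_rotate_to; [exact r_pos| |]; rewrite <- next_circ.
  - apply next_on_circle, circ_on_circle.
  - apply cross_next_pos, circ_on_circle.
Qed.

Local Ltac unfold_coords :=
  unfold next, troot, tdisc, Nmul, dot, circ in *; cbn [fst snd] in *.

Lemma ex_derive_wx t : ex_derive wx t.
Proof.
  pose proof (Nmul_norm_pos _ (circ_on_circle r t)).
  pose proof (tdisc_pos _ (circ_on_circle r t)).
  unfold wx. unfold_coords. auto_derive; repeat split; lra.
Qed.

Lemma ex_derive_wy t : ex_derive wy t.
Proof.
  pose proof (Nmul_norm_pos _ (circ_on_circle r t)).
  pose proof (tdisc_pos _ (circ_on_circle r t)).
  unfold wy. unfold_coords. auto_derive; repeat split; lra.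
Qed.

Lemma ex_derive_beta t : ex_derive beta t.
Proof.
  assert (H : 0 < r * r + dot (circ r t) (wx t, wy t)).
  { rewrite <- next_circ. apply half_angle_denom_pos; auto using circ_on_circle.
    - apply next_on_circle, circ_on_circle.
    - apply cross_next_pos, circ_on_circle. }
  unfold beta, cross, dot, circ in *; cbn [fst snd] in *.
  auto_derive; repeat split; auto using ex_derive_wx, ex_derive_wy; lra.
Qed.

(* Differentiate [bform (circ r t) (circ r (beta t)) = K]. *)
Lemma derive_beta t :
  is_derive beta t (cross (circ r t) (Nmul (next (circ r t))) / troot (circ r t)).
Proof.
  set (F := fun s => bform (circ r s) (circ r (beta s))).
  assert (H0 : is_derive F t 0).
  { apply is_derive_ext with (f := fun _ => K); [|auto_derive; auto].
    intro s. unfold F. rewrite circ_beta. symmetry. apply bform_next, circ_on_circle. }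
  assert (H1 : is_derive F t (Derive beta t * cross (circ r (beta t)) (Nmul (circ r t))
                              + cross (circ r t) (Nmul (circ r (beta t))))).
  { unfold F, bform, Nmul, dot, cross, circ; cbn [fst snd].
    auto_derive; [repeat split; auto using ex_derive_beta|].
    change (fun x : R => beta x) with beta. ring. }
  pose proof (is_derive_unique _ _ _ H0) as E0. pose proof (is_derive_unique _ _ _ H1) as E1.
  rewrite E0, circ_beta, cross_next_Nmul in E1 by apply circ_on_circle.
  pose proof (troot_pos _ (circ_on_circle r t)).
  replace (cross (circ r t) (Nmul (next (circ r t))))
    with (Derive beta t * troot (circ r t)) by lra.
  replace (Derive beta t * troot (circ r t) / troot (circ r t)) with (Derive beta t)
    by (field; lra).
  apply Derive_correct, ex_derive_beta.
Qed.

Lemma cross_Nmul_next_pos p : dot p p = r * r -> 0 < cross p (Nmul (next p)).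
Proof.
  intros Hp. pose proof (next_on_circle p Hp) as Hq.
  pose proof (partner_orientation (next p) p Hq Hp) as S.
  rewrite bform_sym in S. specialize (S (bform_next p Hp)).
  pose proof (cross_next_pos p Hp).
  replace (cross (next p) p) with (- cross p (next p)) in S by (unfold cross; ring). nra.
Qed.

Lemma troot_next p : dot p p = r * r -> troot (next p) = cross p (Nmul (next p)).
Proof.
  intros Hp. pose proof (next_on_circle p Hp) as Hq.
  pose proof (partner_cross_sq (next p) p Hp) as Q.
  rewrite bform_sym in Q. specialize (Q (bform_next p Hp)).
  pose proof (cross_Nmul_next_pos p Hp).
  unfold troot. rewrite <- Q. apply sqrt_square. lra.
Qed.

Lemma beta_nondecreasing s t : s <= t -> beta s <= beta t.
Proof.
  apply (derive_nonneg_nondecreasing beta _ derive_beta). intro t'.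
  left. apply Rdiv_lt_0_compat.
  - apply cross_Nmul_next_pos, circ_on_circle.
  - apply troot_pos, circ_on_circle.
Qed.

Lemma circ_shift_2PI t : circ r (t + 2 * PI) = circ r t.
Proof. unfold circ. rewrite cos_plus, sin_plus, cos_2PI, sin_2PI. f_equal; ring. Qed.

Lemma beta_shift_2PI t : beta (t + 2 * PI) = beta t + 2 * PI.
Proof. unfold beta, wx, wy. rewrite circ_shift_2PI. ring. Qed.

Lemma derive_dot_circ_beta t : is_derive (fun s => dot (circ r s) (circ r (beta s))) t
  ((1 - Derive beta t) * cross (circ r t) (circ r (beta t))).
Proof.
  unfold dot, cross, circ; cbn [fst snd].
  auto_derive; [auto using ex_derive_beta|].
  change (fun x : R => beta x) with beta. ring.
Qed.

Lemma qform_difference p q : dot p p = r * r -> dot q q = r * r ->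
  r * r * (qform q - qform p) = cross p q * (cross q (Nmul p) + cross p (Nmul q)).
Proof.
  intros Hp Hq. unfold qform, bform, Nmul, dot, cross in *.
  destruct p as [x y], q as [x' y']; simpl in *. nsatz.
Qed.

Definition phi (t : R) : R := - (r * r) * qform (circ r t) / troot (circ r t).

Lemma ex_derive_phi t : ex_derive phi t.
Proof.
  pose proof (tdisc_pos _ (circ_on_circle r t)) as H.
  assert (sqrt (tdisc (circ r t)) <> 0) by (apply Rgt_not_eq, sqrt_lt_R0, H).
  unfold phi, qform, bform. unfold_coords. auto_derive; repeat split; auto; lra.
Qed.

Definition Phi (t : R) := RInt phi 0 t.

Lemma derive_Phi t : is_derive Phi t (phi t).
Proof.
  assert (Hc : forall s, continuous phi s)
    by (intro s; exact (@ex_derive_continuous R_AbsRing R_NormedModule phi s (ex_derive_phi s))).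
  apply is_derive_RInt with (a := 0).
  - apply filter_forall. intro s. apply RInt_correct, ex_RInt_continuous. intros; apply Hc.
  - apply Hc.
Qed.

Definition defect (t : R) : R := Phi (beta t) - Phi t - dot (circ r t) (circ r (beta t)).

Lemma derive_defect t : is_derive defect t 0.
Proof.
  set (p := circ r t). set (q := next p).
  assert (Hp : dot p p = r * r) by apply circ_on_circle.
  assert (Hq : dot q q = r * r) by (apply next_on_circle, Hp).
  assert (Hs : 0 < troot p) by (apply troot_pos, Hp).
  assert (HC : 0 < cross p (Nmul q)) by (apply cross_Nmul_next_pos, Hp).
  pose proof (is_derive_unique _ _ _ (derive_beta t)) as Db. fold p q in Db.
  assert (D : is_derive defect t
     (Derive beta t * phi (beta t) - phi t - (1 - Derive beta t) * cross p q)).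
  { unfold defect. apply @is_derive_minus; [apply @is_derive_minus|].
    - apply (is_derive_comp Phi beta); [apply derive_Phi|].
      apply Derive_correct, ex_derive_beta.
    - apply derive_Phi.
    - pose proof (derive_dot_circ_beta t) as H. rewrite circ_beta in H. exact H. }
  replace 0 with (Derive beta t * phi (beta t) - phi t - (1 - Derive beta t) * cross p q);
    [exact D|].
  assert (Htq : troot q = cross p (Nmul q)) by exact (troot_next p Hp).
  assert (Hcq : cross q (Nmul p) = - troot p) by exact (cross_next_Nmul p Hp).
  pose proof (qform_difference p q Hp Hq) as E. rewrite Hcq in E.
  unfold phi. rewrite circ_beta, Db. fold p q. rewrite Htq.
  field_simplify; [|lra].
  unfold Rdiv. apply Rmult_eq_0_compat_r. nra.
Qed.

Lemma defect_const t : defect t = defect 0.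
Proof. apply derive_zero_const, derive_defect. Qed.

Lemma Phi_shift_2PI t : Phi (t + 2 * PI) = Phi t + (Phi (2 * PI) - Phi 0).
Proof.
  assert (E : Phi (t + 2 * PI) - Phi t = Phi (0 + 2 * PI) - Phi 0).
  { apply (derive_zero_const (fun s => Phi (s + 2 * PI) - Phi s)). intro s.
    auto_derive.
    - repeat split; eexists; apply derive_Phi.
    - rewrite !(is_derive_unique _ _ _ (derive_Phi _)).
      unfold phi. rewrite circ_shift_2PI. ring. }
  rewrite Rplus_0_l in E. lra.
Qed.

Lemma beta_iter_nondecreasing k s t : s <= t -> Nat.iter k beta s <= Nat.iter k beta t.
Proof. induction k; simpl; auto using beta_nondecreasing. Qed.

Lemma beta_iter_shift_2PI k t : Nat.iter k beta (t + 2 * PI) = Nat.iter k beta t + 2 * PI.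
Proof. induction k; simpl; auto. rewrite IHk. apply beta_shift_2PI. Qed.

Lemma orbit_dot_sum t k :
  sum_f_R0 (fun i => dot (circ r (Nat.iter i beta t)) (circ r (Nat.iter (S i) beta t))) k =
  Phi (Nat.iter (S k) beta t) - Phi t - INR (S k) * defect 0.
Proof.
  assert (Step : forall s, dot (circ r s) (circ r (beta s)) = Phi (beta s) - Phi s - defect 0)
    by (intro s; rewrite <- (defect_const s); unfold defect; ring).
  induction k as [|k IH].
  - simpl. rewrite Step. ring.
  - rewrite tech5, IH, (Nat.iter_succ (S k)), Step, (S_INR (S k)). ring.
Qed.

Definition ccw_chain (w : nat -> point) : Prop := forall i,
  dot (w i) (w i) = r * r /\ bform (w i) (w (S i)) = K /\ 0 < cross (w i) (w (S i)).

Lemma ccw_chain_circ w t : ccw_chain w -> circ r t = w 0%nat ->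
  forall i, circ r (Nat.iter i beta t) = w i.
Proof.
  intros Hw H0 i. induction i as [|i IH]; [exact H0|].
  rewrite Nat.iter_succ, circ_beta, IH.
  destruct (Hw i) as [Hi [Hb Hc]]. destruct (Hw (S i)) as [HSi _].
  symmetry. exact (next_unique _ _ Hi HSi Hb Hc).
Qed.

Lemma closed_ccw_chain_dot_sum n w : (1 <= n)%nat -> ccw_chain w -> w n = w 0%nat ->
  exists t (m : Z), Nat.iter n beta t = t + 2 * PI * IZR m /\
    dot_sum n w = IZR m * (Phi (2 * PI) - Phi 0) - INR n * defect 0.
Proof.
  intros Hn Hw Hcl. destruct (Hw 0%nat) as [H0 _].
  destruct (circ_onto r _ r_pos H0) as [t Ht].
  pose proof (ccw_chain_circ w t Hw Ht) as Orb.
  assert (Hcs : circ r (Nat.iter n beta t) = circ r t) by (rewrite Orb, Ht; exact Hcl).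
  destruct (circ_inj_mod_2PI r _ _ r_pos Hcs) as [m Hm].
  exists t, m. split; [exact Hm|].
  unfold dot_sum. rewrite <- (sum_eq (fun i => dot (circ r (Nat.iter i beta t))
                                             (circ r (Nat.iter (S i) beta t)))).
  - rewrite orbit_dot_sum. replace (S (pred n)) with n by lia.
    rewrite Hm, (shift_IZR Phi (2 * PI) _ Phi_shift_2PI). ring.
  - intros i _. rewrite !Orb. reflexivity.
Qed.

Lemma closed_ccw_chain_dot_sum_invariant n w w' : (1 <= n)%nat ->
  ccw_chain w -> w n = w 0%nat -> ccw_chain w' -> w' n = w' 0%nat ->
  dot_sum n w = dot_sum n w'.
Proof.
  intros Hn Hw Hcl Hw' Hcl'.
  destruct (closed_ccw_chain_dot_sum n w Hn Hw Hcl) as [t [m [Ht ->]]].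
  destruct (closed_ccw_chain_dot_sum n w' Hn Hw' Hcl') as [t' [m' [Ht' ->]]].
  assert (Hpi : 0 < 2 * PI) by (pose proof PI_RGT_0; lra).
  rewrite (translation_number_unique (Nat.iter n beta) (2 * PI) Hpi
             (beta_iter_nondecreasing n) (beta_iter_shift_2PI n) t t' m m' Ht Ht').
  reflexivity.
Qed.

Definition tangent_chain (w : nat -> point) : Prop := forall i,
  dot (w i) (w i) = r * r /\ bform (w i) (w (S i)) = K /\ w i <> w (S (S i)).

(* Both neighbours of [w (S i)] are tangency partners of it, and distinct ones, so they lie
   on opposite sides of [Nmul (w (S i))]: the chain never reverses its rotational sense. *)
Lemma tangent_chain_turn w i : tangent_chain w ->
  0 < cross (w (S i)) (w (S (S i))) * cross (w i) (w (S i)).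
Proof.
  intros Hw. destruct (Hw i) as [H0 [B0 D0]]. destruct (Hw (S i)) as [H1 [B1 _]].
  destruct (Hw (S (S i))) as [H2 _]. rewrite bform_sym in B0.
  pose proof (partners_opposite _ _ _ H1 H0 H2 B0 B1 D0) as Opp.
  pose proof (partner_orientation _ _ H1 H0 B0) as S0.
  pose proof (partner_orientation _ _ H1 H2 B1) as S2.
  rewrite Opp in S2.
  replace (cross (w (S i)) (w i)) with (- cross (w i) (w (S i))) in S0 by (unfold cross; ring).
  set (D := cross (w i) (Nmul (w (S i)))) in *.
  assert (0 < D * cross (w i) (w (S i))) by lra.
  assert (0 < D * cross (w (S i)) (w (S (S i)))) by lra.
  assert (0 < (D * cross (w (S i)) (w (S (S i)))) * (D * cross (w i) (w (S i))))
    by (apply Rmult_lt_0_compat; assumption).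
  destruct (Rlt_or_le 0 (cross (w (S i)) (w (S (S i))) * cross (w i) (w (S i)))); [assumption|].
  pose proof (Rle_0_sqr D). unfold Rsqr in *. nra.
Qed.

Lemma tangent_chain_ccw w : tangent_chain w -> 0 < cross (w 0%nat) (w 1%nat) -> ccw_chain w.
Proof.
  intros Hw H0.
  assert (Hpos : forall i, 0 < cross (w i) (w (S i))).
  { induction i as [|i IH]; [exact H0|].
    pose proof (tangent_chain_turn w i Hw).
    destruct (Rlt_or_le 0 (cross (w (S i)) (w (S (S i))))); [assumption|]. nra. }
  intro i. destruct (Hw i) as [Hi [Hb _]]. auto.
Qed.

End TangencyCorrespondence.

Definition reflect (p : point) : point := (fst p, - snd p).

Lemma tangent_chain_reflect n11 n12 n22 K r w : tangent_chain n11 n12 n22 K r w ->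
  tangent_chain n11 (- n12) n22 K r (fun i => reflect (w i)).
Proof.
  intros Hw i. destruct (Hw i) as [Hd [Hb Hne]]. unfold reflect.
  unfold tangent_chain, bform, Nmul, dot in *. cbn [fst snd] in *. split; [|split].
  - rewrite <- Hd. ring.
  - rewrite <- Hb. ring.
  - intro E. injection E as E1 E2. apply Hne.
    destruct (w i), (w (S (S i))); cbn in *; f_equal; lra.
Qed.

Lemma closed_tangent_chain_dot_sum_invariant n11 n12 n22 K r n w w' :
  0 < r ->
  (forall p, dot p p = r * r -> 0 < qform n11 n12 n22 p /\
     K * K < qform n11 n12 n22 p * qform n11 n12 n22 p) ->
  (1 <= n)%nat ->
  tangent_chain n11 n12 n22 K r w -> w n = w 0%nat ->
  tangent_chain n11 n12 n22 K r w' -> w' n = w' 0%nat ->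
  0 < cross (w 0%nat) (w 1%nat) * cross (w' 0%nat) (w' 1%nat) ->
  dot_sum n w = dot_sum n w'.
Proof.
  intros Hr Hadm Hn Hw Hcl Hw' Hcl' Hsign.
  destruct (Rlt_or_le 0 (cross (w 0%nat) (w 1%nat))) as [Hpos | Hneg].
  - apply (closed_ccw_chain_dot_sum_invariant n11 n12 n22 K r); auto;
      apply tangent_chain_ccw; auto; nra.
  - assert (Hlt : cross (w 0%nat) (w 1%nat) < 0)
      by (destruct Hneg as [|E]; [assumption | rewrite E in Hsign; lra]).
    assert (Hlt' : cross (w' 0%nat) (w' 1%nat) < 0) by nra.
    assert (Hadm' : forall p, dot p p = r * r -> 0 < qform n11 (- n12) n22 p /\
        K * K < qform n11 (- n12) n22 p * qform n11 (- n12) n22 p).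
    { intros p Hp. replace (qform n11 (- n12) n22 p) with (qform n11 n12 n22 (reflect p))
        by (unfold qform, bform, Nmul, dot, reflect; simpl; ring).
      apply Hadm. rewrite <- Hp. unfold dot, reflect; simpl; ring. }
    assert (Hccw : forall v, tangent_chain n11 n12 n22 K r v -> cross (v 0%nat) (v 1%nat) < 0 ->
        ccw_chain n11 (- n12) n22 K r (fun i => reflect (v i))).
    { intros v Hv Hv0. apply tangent_chain_ccw; [exact Hr | exact Hadm' |
        apply tangent_chain_reflect, Hv |].
      unfold cross, reflect in *; simpl. lra. }
    assert (Hdot : forall v, dot_sum n (fun i => reflect (v i)) = dot_sum n v)
      by (intro v; apply sum_eq; intros; unfold dot, reflect; simpl; ring).
    rewrite <- (Hdot w), <- (Hdot w').
    apply (closed_ccw_chain_dot_sum_invariant n11 (- n12) n22 K r); auto; cbv beta; congruence.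
Qed.

Lemma ellipse_form_pos a b c X Y : is_ellipse_params a b c -> X <> 0 \/ Y <> 0 ->
  0 < a * X * X + 2 * b * X * Y + c * Y * Y.
Proof.
  intros [Ha Hd] HXY.
  assert (E : a * (a * X * X + 2 * b * X * Y + c * Y * Y)
              = (a * X + b * Y) * (a * X + b * Y) + (a * c - b * b) * (Y * Y)) by ring.
  assert (0 < (a * X + b * Y) * (a * X + b * Y) + (a * c - b * b) * (Y * Y)).
  { destruct (Req_dec Y 0) as [HY | HY].
    - destruct HXY as [HX | HY']; [|contradiction]. subst Y.
      pose proof (Rsqr_pos_lt (a * X) ltac:(apply Rmult_integral_contrapositive_currified; lra)).
      unfold Rsqr in *. nra.
    - pose proof (Rsqr_pos_lt Y HY). pose proof (Rle_0_sqr (a * X + b * Y)).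
      unfold Rsqr in *. nra. }
  nra.
Qed.

Lemma ellipse_inside_circle_form O a b c r X Y : 0 < r -> is_ellipse_params a b c ->
  ellipse_inside_circle O a b c r -> X <> 0 \/ Y <> 0 ->
  X * X + Y * Y < r * r * (a * X * X + 2 * b * X * Y + c * Y * Y).
Proof.
  intros Hr He Hin HXY.
  set (q := a * X * X + 2 * b * X * Y + c * Y * Y).
  assert (Hq : 0 < q) by (apply ellipse_form_pos; assumption).
  set (s := sqrt q).
  assert (Hs : 0 < s) by (apply sqrt_lt_R0; exact Hq).
  assert (Hss : s * s = q) by (apply sqrt_sqrt; lra).
  specialize (Hin (fst O + X / s, snd O + Y / s)).
  unfold on_ellipse, vnorm, vsub, dot in Hin. cbn [fst snd] in Hin.
  replace (fst O + X / s - fst O) with (X / s) in Hin by ring.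
  replace (snd O + Y / s - snd O) with (Y / s) in Hin by ring.
  replace (a * (X / s) * (X / s) + 2 * b * (X / s) * (Y / s) + c * (Y / s) * (Y / s))
    with (q / (s * s)) in Hin by (unfold q; field; lra).
  replace (X / s * (X / s) + Y / s * (Y / s)) with ((X * X + Y * Y) / q) in Hin
    by (rewrite <- Hss; field; lra).
  rewrite Hss in Hin. specialize (Hin ltac:(field; lra)).
  assert (Hlt : (X * X + Y * Y) / q < r * r).
  { destruct (Rlt_or_le ((X * X + Y * Y) / q) (r * r)) as [|Hge]; [assumption|].
    apply sqrt_le_1_alt in Hge. rewrite sqrt_square in Hge by lra. lra. }
  apply (Rmult_lt_reg_r (/ q)); [apply Rinv_0_lt_compat; lra|].
  replace (r * r * q * / q) with (r * r) by (field; lra). exact Hlt.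
Qed.

(* Apply [ellipse_inside_circle_form] to the adjugate vector of [(x, y)], then
   Cauchy-Schwarz. *)
Lemma adjugate_form_lt O a b c r x y : 0 < r -> is_ellipse_params a b c ->
  ellipse_inside_circle O a b c r -> x * x + y * y = r * r ->
  c * x * x + 2 * (- b) * x * y + a * y * y < r * r * r * r * (a * c - b * b).
Proof.
  intros Hr He Hin Hxy. destruct He as [Ha Hd].
  assert (Hxy0 : x <> 0 \/ y <> 0).
  { destruct (Req_dec x 0) as [-> | ]; [right|left; assumption]. intro; subst. nra. }
  assert (Hc : 0 < c) by nra.
  set (adj := c * x * x + 2 * (- b) * x * y + a * y * y).
  assert (Hadj : 0 < adj) by (apply ellipse_form_pos; [split; lra | exact Hxy0]).
  set (X := c * x - b * y). set (Y := - b * x + a * y).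
  assert (HXY : X <> 0 \/ Y <> 0).
  { destruct (Req_dec X 0) as [HX|HX]; [|left; exact HX].
    destruct (Req_dec Y 0) as [HY|HY]; [|right; exact HY].
    exfalso. destruct Hxy0 as [Hx|Hy].
    - apply Hx, (Rmult_eq_reg_l (a * c - b * b)); [|lra].
      replace ((a * c - b * b) * x) with (a * X + b * Y) by (unfold X, Y; ring). nra.
    - apply Hy, (Rmult_eq_reg_l (a * c - b * b)); [|lra].
      replace ((a * c - b * b) * y) with (b * X + c * Y) by (unfold X, Y; ring). nra. }
  pose proof (ellipse_inside_circle_form O a b c r X Y Hr (conj Ha Hd) Hin HXY) as Hlt.
  replace (a * X * X + 2 * b * X * Y + c * Y * Y) with ((a * c - b * b) * adj) in Hlt
    by (unfold X, Y, adj; ring).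
  pose proof (dot_cross_sq (x, y) (X, Y)) as CS. unfold dot, cross in CS; cbn [fst snd] in CS.
  replace (x * X + y * Y) with adj in CS by (unfold adj, X, Y; ring).
  rewrite Hxy in CS. pose proof (Rle_0_sqr (x * Y - y * X)). unfold Rsqr in *.
  assert (r * r * (X * X + Y * Y) < r * r * (r * r * ((a * c - b * b) * adj)))
    by (apply Rmult_lt_compat_l; nra).
  apply (Rmult_lt_reg_r adj); [exact Hadj|]. nra.
Qed.

(* For [p], [q] on the circle [dot x x = r^2], the ellipse equation restricted to the chord
   [pq] is a quadratic whose reduced discriminant is [- |q - p|^2 / (2 r^2)] times
   [bform tangency_n11 (2 b) tangency_n22 p q - tangency_K]. *)
Definition tangency_n11 (a b c r : R) : R := r * r * (a * c - b * b) + a - c.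
Definition tangency_n22 (a b c r : R) : R := r * r * (a * c - b * b) + c - a.
Definition tangency_K (a b c r : R) : R := r * r * (a + c - r * r * (a * c - b * b)).

Lemma tangency_admissible O a b c r : 0 < r -> is_ellipse_params a b c ->
  ellipse_inside_circle O a b c r ->
  forall p, dot p p = r * r ->
    0 < qform (tangency_n11 a b c r) (2 * b) (tangency_n22 a b c r) p /\
    tangency_K a b c r * tangency_K a b c r <
      qform (tangency_n11 a b c r) (2 * b) (tangency_n22 a b c r) p *
      qform (tangency_n11 a b c r) (2 * b) (tangency_n22 a b c r) p.
Proof.
  intros Hr He Hin [x y] Hp. unfold dot in Hp; cbn [fst snd] in Hp.
  pose proof (adjugate_form_lt O a b c r x y Hr He Hin Hp) as Hadj.
  assert (Hxy : x <> 0 \/ y <> 0).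
  { destruct (Req_dec x 0) as [-> | ]; [right|left; assumption]. intro; subst. nra. }
  pose proof (ellipse_form_pos a b c x y He Hxy) as HQ.
  set (P := qform (tangency_n11 a b c r) (2 * b) (tangency_n22 a b c r) (x, y)).
  set (k := tangency_K a b c r).
  assert (Hminus : P - k = 2 * (r * r * r * r * (a * c - b * b)
                                - (c * x * x + 2 * (- b) * x * y + a * y * y))).
  { unfold P, k, qform, bform, Nmul, dot, tangency_n11, tangency_n22, tangency_K.
    cbn [fst snd]. clear - Hp. nsatz. }
  assert (Hplus : P + k = 2 * (a * x * x + 2 * b * x * y + c * y * y)).
  { unfold P, k, qform, bform, Nmul, dot, tangency_n11, tangency_n22, tangency_K.
    cbn [fst snd]. clear - Hp. nsatz. }
  assert (0 < P - k) by lra. assert (0 < P + k) by lra.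
  split; [lra|]. nra.
Qed.

Lemma unique_root_discriminant A B C : 0 < A ->
  (exists! t, A * t * t + 2 * B * t + C = 0) -> B * B - A * C = 0.
Proof.
  intros HA [t [Ht Hu]].
  assert (Hrefl : A * (- 2 * B / A - t) * (- 2 * B / A - t) + 2 * B * (- 2 * B / A - t) + C = 0)
    by (rewrite <- Ht; field; lra).
  specialize (Hu _ Hrefl).
  assert (Htv : t = - B / A) by (apply (Rmult_eq_reg_l 2); [|lra]; field_simplify; lra).
  rewrite Htv in Ht.
  replace (B * B - A * C) with (- (A * (A * (- B / A) * (- B / A) + 2 * B * (- B / A) + C)))
    by (field; lra).
  rewrite Ht. ring.
Qed.

Lemma on_circle_dot O r p : on_circle O r p -> dot (vsub p O) (vsub p O) = r * r.
Proof.
  unfold on_circle, vnorm. intros <-. symmetry. apply sqrt_sqrt.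
  unfold dot. pose proof (Rle_0_sqr (fst (vsub p O))). pose proof (Rle_0_sqr (snd (vsub p O))).
  unfold Rsqr in *. lra.
Qed.

Lemma tangent_line_bform O a b c r p q : is_ellipse_params a b c ->
  on_circle O r p -> on_circle O r q -> tangent_line O a b c p q ->
  bform (tangency_n11 a b c r) (2 * b) (tangency_n22 a b c r) (vsub p O) (vsub q O)
  = tangency_K a b c r.
Proof.
  intros He Hp Hq [Hpq Htan].
  apply on_circle_dot in Hp, Hq.
  destruct p as [p0 p1], q as [q0 q1], O as [o0 o1].
  unfold vsub, dot in *; cbn [fst snd] in *.
  set (x0 := p0 - o0) in *. set (y0 := p1 - o1) in *.
  set (d0 := q0 - p0). set (d1 := q1 - p1).
  assert (Hd : d0 <> 0 \/ d1 <> 0).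
  { destruct (Req_dec d0 0) as [H0|H0]; [|left; exact H0].
    destruct (Req_dec d1 0) as [H1|H1]; [|right; exact H1].
    exfalso. apply Hpq. unfold d0, d1 in *. f_equal; lra. }
  set (A := a * d0 * d0 + 2 * b * d0 * d1 + c * d1 * d1).
  set (B := a * x0 * d0 + b * (x0 * d1 + y0 * d0) + c * y0 * d1).
  set (C := a * x0 * x0 + 2 * b * x0 * y0 + c * y0 * y0 - 1).
  assert (Disc : B * B - A * C = 0).
  { apply unique_root_discriminant; [apply ellipse_form_pos; assumption|].
    destruct Htan as [t [Ht Hu]]. exists t. unfold on_ellipse in *; cbn [fst snd] in *.
    split.
    - unfold A, B, C, x0, y0, d0, d1. rewrite <- Ht. ring.
    - intros t' Ht'. apply Hu. unfold A, B, C, x0, y0, d0, d1 in Ht'. lra. }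
  assert (Id : 2 * (r * r) * (B * B - A * C) =
    - (d0 * d0 + d1 * d1) *
      (bform (tangency_n11 a b c r) (2 * b) (tangency_n22 a b c r)
             (x0, y0) (q0 - o0, q1 - o1) - tangency_K a b c r)).
  { unfold A, B, C, bform, Nmul, dot, tangency_n11, tangency_n22, tangency_K;
      cbn [fst snd]. unfold d0, d1, x0, y0 in *. clear - Hp Hq. nsatz. }
  rewrite Disc in Id.
  assert (0 < d0 * d0 + d1 * d1).
  { destruct Hd as [Hd|Hd]; pose proof (Rsqr_pos_lt _ Hd);
      pose proof (Rle_0_sqr d0); pose proof (Rle_0_sqr d1); unfold Rsqr in *; lra. }
  nra.
Qed.

Definition centered (O : point) (n : nat) (u : nat -> point) (i : nat) : point :=
  vsub (u (i mod n)) O.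

Lemma centered_closed O n u : centered O n u n = centered O n u 0%nat.
Proof. unfold centered. now rewrite Nat.Div0.mod_same, Nat.Div0.mod_0_l. Qed.

Lemma centered_0 O n u : centered O n u 0%nat = vsub (u 0%nat) O.
Proof. unfold centered. now rewrite Nat.Div0.mod_0_l. Qed.

Lemma poncelet_tangent_chain O r a b c n u : is_ellipse_params a b c -> (1 <= n)%nat ->
  poncelet_ngon O r a b c n u ->
  tangent_chain (tangency_n11 a b c r) (2 * b) (tangency_n22 a b c r) (tangency_K a b c r) r
                (centered O n u).
Proof.
  intros He Hn Hu i.
  assert (H1 : S (i mod n) mod n = S i mod n) by exact (Nat.Div0.add_mod_idemp_r 1 i n).
  assert (H2 : S (S (i mod n)) mod n = S (S i) mod n)
    by exact (Nat.Div0.add_mod_idemp_r 2 i n).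
  assert (Hi : (i mod n < n)%nat) by (apply Nat.mod_upper_bound; lia).
  assert (Hi1 : (S (i mod n) mod n < n)%nat) by (apply Nat.mod_upper_bound; lia).
  destruct (Hu _ Hi) as [C0 [T0 D0]]. destruct (Hu _ Hi1) as [C1 _].
  rewrite H1 in T0, C1. rewrite H2 in D0.
  unfold centered. split; [|split].
  - apply on_circle_dot, C0.
  - apply tangent_line_bform; assumption.
  - intro E. apply D0. destruct (u (i mod n)), (u (S (S i) mod n)).
    unfold vsub in E. injection E as E1 E2. cbn in *. f_equal; lra.
Qed.

Lemma cos_angle_sum_dot_sum O r a b c n u : (1 <= n)%nat -> 0 < r ->
  poncelet_ngon O r a b c n u ->
  cos_angle_sum O n u = dot_sum n (centered O n u) / (r * r).
Proof.
  intros Hn Hr Hu. unfold cos_angle_sum, dot_sum, Rdiv.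
  rewrite Rmult_comm, scal_sum. apply sum_eq. intros i Hi.
  assert (Hin : (i < n)%nat) by lia.
  assert (Hj : (S i mod n < n)%nat) by (apply Nat.mod_upper_bound; lia).
  destruct (Hu _ Hin) as [Ci _]. destruct (Hu _ Hj) as [Cj _].
  unfold centered. rewrite (Nat.mod_small i n Hin).
  pose proof (on_circle_dot _ _ _ Ci) as Di. pose proof (on_circle_dot _ _ _ Cj) as Dj.
  unfold angle. unfold on_circle in Ci, Cj. rewrite Ci, Cj.
  set (p := vsub (u i) O) in *. set (q := vsub (u (S i mod n)) O) in *.
  pose proof (dot_cross_sq p q) as L. rewrite Di, Dj in L.
  pose proof (Rle_0_sqr (cross p q)). unfold Rsqr in *.
  assert (Hr2 : 0 < r * r) by nra.
  assert (Hb : -1 <= dot p q / (r * r) <= 1).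
  { assert (- (r * r) <= dot p q <= r * r) by nra.
    split; [apply (Rmult_le_reg_r (r * r)) | apply (Rmult_le_reg_r (r * r))];
      unfold Rdiv; rewrite ?Rmult_assoc, ?Rinv_l; lra. }
  rewrite cos_acos by exact Hb. unfold Rdiv. ring.
Qed.

Theorem theorem4p1 (O : point) (r a b c : R) (n : nat) (u : nat -> point) :
  (3 <= n)%nat ->
  0 < r ->
  is_ellipse_params a b c ->
  ellipse_inside_circle O a b c r ->
  poncelet_ngon O r a b c n u ->
  forall v : nat -> point,
    in_poncelet_family O r a b c n u v ->
    cos_angle_sum O n v = cos_angle_sum O n u.
Proof.
  intros Hn Hr He Hin Hu v [Hv Hsign].
  assert (Hn1 : (1 <= n)%nat) by lia.
  rewrite !(cos_angle_sum_dot_sum O r a b c n) by assumption.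
  f_equal.
  apply (closed_tangent_chain_dot_sum_invariant
           (tangency_n11 a b c r) (2 * b) (tangency_n22 a b c r) (tangency_K a b c r) r);
    auto using poncelet_tangent_chain, centered_closed.
  - exact (tangency_admissible O a b c r Hr He Hin).
  - rewrite !centered_0. unfold centered. lra.
Qed.
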